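(* Let $A = \begin{pmatrix} 2 & 1 \\ 1 & 1\end{pmatrix}$, $\lambda = \frac{3+\sqrt5}{2}$, and let $M_A$ be the suspension of $A$ with the Riemannian metric $ds^2 = dz^2 + e^{2z\log\lambda}du^2 + e^{-2z\log\lambda}dv^2$ (see context). Then the restrictions of the geodesic flow on $SM_A$ to the invariant submanifolds $V^+ = \{p_u=p_v=0,\ p_z=1\}$ and $V^- = \{p_u=p_v=0,\ p_z=-1\}$ are Anosov flows.
   Context: $T^2 = \mathbb{R}^2/\mathbb{Z}^2$ with $A$ acting linearly; $M_A$ is the quotient of $T^2 \times \mathbb{R}$ by the $\mathbb{Z}$-action generated by $(X,z)\mapsto (AX,z+1)$. $(u,v)$ are linear coordinates on $\mathbb{R}^2$ in which $A(u,v) = (\lambda^{-1}u,\lambda v)$; the metric above is invariant under the $\mathbb{Z}$-action and descends to $M_A$. $(p_u,p_v,p_z)$ are the momenta conjugate to $(u,v,z)$, and the geodesic flow is the Hamiltonian flow of $H = \frac12(p_z^2 + e^{-2z\log\lambda}p_u^2 + e^{2z\log\lambda}p_v^2)$ on $SM_A = \{H = 1/2\}$. *)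

From Stdlib Require Import Reals.
From Coquelicot Require Import Coquelicot.
Open Scope R_scope.

(* lambda = (3+sqrt 5)/2, the expanding eigenvalue of A = [[2,1],[1,1]] *)
Definition lam : R := (3 + sqrt 5) / 2.
Definition llam : R := ln lam.

(* Points of the cotangent bundle of the cover T^2 x R -> M_A, in the
   coordinates (u, v, z, p_u, p_v, p_z). *)
Record phase := mkP { cu : R; cv : R; cz : R; pu : R; pv : R; pz : R }.

Definition Ham (y : phase) : R :=
  / 2 * (pz y ^ 2 + exp (- 2 * cz y * llam) * pu y ^ 2
         + exp (2 * cz y * llam) * pv y ^ 2).

Definition dH_du (y : phase) := Derive (fun s => Ham (mkP s (cv y) (cz y) (pu y) (pv y) (pz y))) (cu y).
Definition dH_dv (y : phase) := Derive (fun s => Ham (mkP (cu y) s (cz y) (pu y) (pv y) (pz y))) (cv y).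
Definition dH_dz (y : phase) := Derive (fun s => Ham (mkP (cu y) (cv y) s (pu y) (pv y) (pz y))) (cz y).
Definition dH_dpu (y : phase) := Derive (fun s => Ham (mkP (cu y) (cv y) (cz y) s (pv y) (pz y))) (pu y).
Definition dH_dpv (y : phase) := Derive (fun s => Ham (mkP (cu y) (cv y) (cz y) (pu y) s (pz y))) (pv y).
Definition dH_dpz (y : phase) := Derive (fun s => Ham (mkP (cu y) (cv y) (cz y) (pu y) (pv y) s)) (pz y).

(* Phi is the geodesic flow on SM_A = {H = 1/2} (lifted to the cover):
   the Hamiltonian flow of H. *)
Definition is_geodesic_flow (Phi : R -> phase -> phase) : Prop :=
  forall y, Ham y = 1 / 2 ->
    Phi 0 y = y /\
    forall t,
      is_derive (fun s => cu (Phi s y)) t (dH_dpu (Phi t y)) /\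
      is_derive (fun s => cv (Phi s y)) t (dH_dpv (Phi t y)) /\
      is_derive (fun s => cz (Phi s y)) t (dH_dpz (Phi t y)) /\
      is_derive (fun s => pu (Phi s y)) t (- dH_du (Phi t y)) /\
      is_derive (fun s => pv (Phi s y)) t (- dH_dv (Phi t y)) /\
      is_derive (fun s => pz (Phi s y)) t (- dH_dz (Phi t y)).

(* Points / tangent vectors of the 3-manifold V^{+-} (coordinates (u,v,z)). *)
Record vec3 := mkV { v1 : R; v2 : R; v3 : R }.
Definition vadd (a b : vec3) : vec3 := mkV (v1 a + v1 b) (v2 a + v2 b) (v3 a + v3 b).
Definition vscale (c : R) (a : vec3) : vec3 := mkV (c * v1 a) (c * v2 a) (c * v3 a).
Definition vzero : vec3 := mkV 0 0 0.

Definition embedV (sigma : R) (x : vec3) : phase := mkP (v1 x) (v2 x) (v3 x) 0 0 sigma.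
Definition in_V (sigma : R) (y : phase) : Prop := pu y = 0 /\ pv y = 0 /\ pz y = sigma.

Definition restrict_flow (Phi : R -> phase -> phase) (sigma : R) (t : R) (x : vec3) : vec3 :=
  let y := Phi t (embedV sigma x) in mkV (cu y) (cv y) (cz y).

(* Riemannian metric on V^sigma: pulled back from M_A (ds^2 = dz^2 +
   e^{2 z log lam} du^2 + e^{-2 z log lam} dv^2) by the projection
   V^sigma -> M_A; it is invariant under the deck group. *)
Definition gnorm (x w : vec3) : R :=
  sqrt (exp (2 * v3 x * llam) * v1 w ^ 2 + exp (- 2 * v3 x * llam) * v2 w ^ 2 + v3 w ^ 2).

Definition is_subspace (E : vec3 -> Prop) : Prop :=
  E vzero /\ (forall a b, E a -> E b -> E (vadd a b)) /\ (forall c a, E a -> E (vscale c a)).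

Definition is_flow3 (psi : R -> vec3 -> vec3) : Prop :=
  (forall x, psi 0 x = x) /\ (forall s t x, psi (s + t) x = psi s (psi t x)).

Definition flow_diff (psi : R -> vec3 -> vec3) (t : R) (x w d : vec3) : Prop :=
  is_derive (fun s => v1 (psi t (vadd x (vscale s w)))) 0 (v1 d) /\
  is_derive (fun s => v2 (psi t (vadd x (vscale s w)))) 0 (v2 d) /\
  is_derive (fun s => v3 (psi t (vadd x (vscale s w)))) 0 (v3 d).

Definition flow_vel (psi : R -> vec3 -> vec3) (x X : vec3) : Prop :=
  is_derive (fun t => v1 (psi t x)) 0 (v1 X) /\
  is_derive (fun t => v2 (psi t x)) 0 (v2 X) /\
  is_derive (fun t => v3 (psi t x)) 0 (v3 X).

Definition Anosov_flow (psi : R -> vec3 -> vec3) : Prop :=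
  is_flow3 psi /\
  (forall t x w, exists d, flow_diff psi t x w d) /\
  (forall x, exists X, flow_vel psi x X /\ X <> vzero) /\
  exists (Es Eu : vec3 -> vec3 -> Prop) (C mu : R),
    0 < C /\ 0 < mu /\
    (forall x, is_subspace (Es x) /\ is_subspace (Eu x)) /\
    (forall x X, flow_vel psi x X ->
       (forall w, exists a b c, Es x a /\ Eu x b /\ w = vadd a (vadd b (vscale c X))) /\
       (forall a b c, Es x a -> Eu x b -> vadd a (vadd b (vscale c X)) = vzero ->
          a = vzero /\ b = vzero /\ c = 0)) /\
    (forall t x w d, flow_diff psi t x w d ->
       (Es x w -> Es (psi t x) d /\
          (0 <= t -> gnorm (psi t x) d <= C * exp (- mu * t) * gnorm x w)) /\
       (Eu x w -> Eu (psi t x) d /\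
          (t <= 0 -> gnorm (psi t x) d <= C * exp (mu * t) * gnorm x w))).

(** On V^{+-} the momenta p_u, p_v vanish along the flow, so the geodesic flow
    there is the vertical translation z |-> z +- t, whose differential is the
    identity.  A horizontal vector w has length e^{z log lam} |w_u| in the
    u-direction and e^{-z log lam} |w_v| in the v-direction, so moving upwards
    contracts the v-line and expands the u-line at the rate log lam > 0, and
    moving downwards does the opposite. *)

From Stdlib Require Import Reals Lra FunctionalExtensionality.
From Coquelicot Require Import Coquelicot.
Open Scope R_scope.

Lemma affine_of_const_derive (f : R -> R) (c : R) :
  (forall t, is_derive f t c) -> forall t, f t = f 0 + c * t.
Proof.
  intros Hf t.
  assert (Hg : forall r, is_derive (fun r => f r - c * r) r 0).
  { intro r. replace 0 with (c - c * 1) by ring.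
    apply (is_derive_minus f (fun r => c * r)); [apply Hf|].
    auto_derive; [trivial | ring]. }
  assert (Heq : f t - c * t = f 0 - c * 0).
  { destruct (Rtotal_order t 0) as [Hlt | [-> | Hgt]].
    - apply (eq_is_derive (fun r => f r - c * r)); [intros; apply Hg | exact Hlt].
    - reflexivity.
    - symmetry; apply (eq_is_derive (fun r => f r - c * r)); [intros; apply Hg | exact Hgt]. }
  lra.
Qed.

Lemma const_of_zero_derive (f : R -> R) :
  (forall t, is_derive f t 0) -> forall t, f t = f 0.
Proof.
  intros Hf t. rewrite (affine_of_const_derive f 0 Hf t). ring.
Qed.

Lemma llam_pos : 0 < llam.
Proof.
  unfold llam, lam. rewrite <- ln_1. apply ln_increasing; [lra|].
  pose proof (sqrt_pos 5). lra.
Qed.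

Lemma exp_double (a : R) : exp (2 * a) = exp a ^ 2.
Proof. replace (2 * a) with (a + a) by ring. rewrite exp_plus. ring. Qed.

Lemma vec3_ext (a b : vec3) : v1 a = v1 b -> v2 a = v2 b -> v3 a = v3 b -> a = b.
Proof. destruct a, b; simpl; intros -> -> ->; reflexivity. Qed.

Lemma vadd_left_comm (a b c : vec3) : vadd a (vadd b c) = vadd b (vadd a c).
Proof. apply vec3_ext; simpl; ring. Qed.

Lemma dH_du_eq (y : phase) : dH_du y = 0.
Proof. unfold dH_du, Ham; cbn. apply Derive_const. Qed.

Lemma dH_dv_eq (y : phase) : dH_dv y = 0.
Proof. unfold dH_dv, Ham; cbn. apply Derive_const. Qed.

Lemma dH_dz_eq (y : phase) :
  dH_dz y = llam * (exp (2 * cz y * llam) * pv y ^ 2 - exp (- 2 * cz y * llam) * pu y ^ 2).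
Proof.
  unfold dH_dz, Ham; simpl. apply is_derive_unique.
  auto_derive; [trivial | simpl; field].
Qed.

Lemma dH_dpu_eq (y : phase) : dH_dpu y = exp (- 2 * cz y * llam) * pu y.
Proof.
  unfold dH_dpu, Ham; simpl. apply is_derive_unique.
  auto_derive; [trivial | simpl; field].
Qed.

Lemma dH_dpv_eq (y : phase) : dH_dpv y = exp (2 * cz y * llam) * pv y.
Proof.
  unfold dH_dpv, Ham; simpl. apply is_derive_unique.
  auto_derive; [trivial | simpl; field].
Qed.

Lemma dH_dpz_eq (y : phase) : dH_dpz y = pz y.
Proof.
  unfold dH_dpz, Ham; simpl. apply is_derive_unique.
  auto_derive; [trivial | simpl; field].
Qed.

Lemma Ham_embedV (s : R) (x : vec3) : s * s = 1 -> Ham (embedV s x) = 1 / 2.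
Proof.
  intro Hs. unfold Ham; simpl.
  replace (s * (s * 1)) with (s * s) by ring. rewrite Hs. field.
Qed.

Lemma geodesic_flow_preserves_V (Phi : R -> phase -> phase) (s : R) (x : vec3) :
  is_geodesic_flow Phi -> s * s = 1 ->
  forall t, in_V s (Phi t (embedV s x)).
Proof.
  intros HPhi Hs.
  destruct (HPhi _ (Ham_embedV s x Hs)) as [Hinit Hode].
  set (y := fun r => Phi r (embedV s x)).
  change (y 0 = embedV s x) in Hinit.
  assert (Hpu : forall r, pu (y r) = 0).
  { intro r. rewrite (const_of_zero_derive (fun r => pu (y r))), Hinit; [reflexivity|].
    intro r'. destruct (Hode r') as (_ & _ & _ & H & _).
    rewrite dH_du_eq, Ropp_0 in H. exact H. }
  assert (Hpv : forall r, pv (y r) = 0).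
  { intro r. rewrite (const_of_zero_derive (fun r => pv (y r))), Hinit; [reflexivity|].
    intro r'. destruct (Hode r') as (_ & _ & _ & _ & H & _).
    rewrite dH_dv_eq, Ropp_0 in H. exact H. }
  intro t. split; [apply Hpu | split; [apply Hpv|]].
  change (pz (y t) = s).
  rewrite (const_of_zero_derive (fun r => pz (y r))), Hinit; [reflexivity|].
  intro r'. destruct (Hode r') as (_ & _ & _ & _ & _ & H).
  rewrite dH_dz_eq in H. fold (y r') in H. rewrite Hpu, Hpv in H.
  replace (- _) with 0 in H by ring. exact H.
Qed.

Definition zshift (s t : R) (x : vec3) : vec3 := mkV (v1 x) (v2 x) (v3 x + s * t).

Lemma geodesic_flow_on_V (Phi : R -> phase -> phase) (s t : R) (x : vec3) :
  is_geodesic_flow Phi -> s * s = 1 ->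
  Phi t (embedV s x) = embedV s (zshift s t x).
Proof.
  intros HPhi Hs.
  pose proof (geodesic_flow_preserves_V Phi s x HPhi Hs) as Hmom.
  destruct (HPhi _ (Ham_embedV s x Hs)) as [Hinit Hode].
  set (y := fun r => Phi r (embedV s x)).
  change (y 0 = embedV s x) in Hinit. change (forall r, in_V s (y r)) in Hmom.
  assert (Hcu : forall r, cu (y r) = v1 x).
  { intro r. rewrite (const_of_zero_derive (fun r => cu (y r))), Hinit; [reflexivity|].
    intro r'. destruct (Hode r') as (H & _). destruct (Hmom r') as (Hpu & _).
    rewrite dH_dpu_eq in H. fold (y r') in H. rewrite Hpu, Rmult_0_r in H. exact H. }
  assert (Hcv : forall r, cv (y r) = v2 x).
  { intro r. rewrite (const_of_zero_derive (fun r => cv (y r))), Hinit; [reflexivity|].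
    intro r'. destruct (Hode r') as (_ & H & _). destruct (Hmom r') as (_ & Hpv & _).
    rewrite dH_dpv_eq in H. fold (y r') in H. rewrite Hpv, Rmult_0_r in H. exact H. }
  assert (Hcz : forall r, cz (y r) = v3 x + s * r).
  { intro r. rewrite (affine_of_const_derive (fun r => cz (y r)) s), Hinit; [reflexivity|].
    intro r'. destruct (Hode r') as (_ & _ & H & _). destruct (Hmom r') as (_ & _ & Hpz).
    rewrite dH_dpz_eq in H. fold (y r') in H. rewrite Hpz in H. exact H. }
  change (y t = embedV s (zshift s t x)).
  destruct (Hmom t) as (Hpu & Hpv & Hpz).
  specialize (Hcu t); specialize (Hcv t); specialize (Hcz t).
  destruct (y t); simpl in *; subst; reflexivity.
Qed.

Lemma flow_vel_unique (psi : R -> vec3 -> vec3) (x X Y : vec3) :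
  flow_vel psi x X -> flow_vel psi x Y -> X = Y.
Proof.
  intros (HX1 & HX2 & HX3) (HY1 & HY2 & HY3).
  apply is_derive_unique in HX1, HX2, HX3, HY1, HY2, HY3.
  apply vec3_ext; congruence.
Qed.

Lemma flow_diff_unique (psi : R -> vec3 -> vec3) (t : R) (x w d d' : vec3) :
  flow_diff psi t x w d -> flow_diff psi t x w d' -> d = d'.
Proof.
  intros (Hd1 & Hd2 & Hd3) (Hd1' & Hd2' & Hd3').
  apply is_derive_unique in Hd1, Hd2, Hd3, Hd1', Hd2', Hd3'.
  apply vec3_ext; congruence.
Qed.

Definition u_line (w : vec3) : Prop := v2 w = 0 /\ v3 w = 0.
Definition v_line (w : vec3) : Prop := v1 w = 0 /\ v3 w = 0.

Definition splits (Es Eu : vec3 -> Prop) (X : vec3) : Prop :=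
  (forall w, exists a b c, Es a /\ Eu b /\ w = vadd a (vadd b (vscale c X))) /\
  (forall a b c, Es a -> Eu b -> vadd a (vadd b (vscale c X)) = vzero ->
     a = vzero /\ b = vzero /\ c = 0).

Lemma splits_sym (Es Eu : vec3 -> Prop) (X : vec3) : splits Es Eu X -> splits Eu Es X.
Proof.
  intros [Hspan Hfree]. split.
  - intro w. destruct (Hspan w) as (a & b & c & Ha & Hb & ->).
    exists b, a, c. rewrite vadd_left_comm. auto.
  - intros b a c Hb Ha H0. rewrite vadd_left_comm in H0.
    destruct (Hfree a b c Ha Hb H0) as (-> & -> & ->). auto.
Qed.

Lemma line_subspace (i : vec3 -> R) (j : vec3 -> R) :
  (forall a b, i (vadd a b) = i a + i b) -> (forall c a, i (vscale c a) = c * i a) ->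
  (forall a b, j (vadd a b) = j a + j b) -> (forall c a, j (vscale c a) = c * j a) ->
  i vzero = 0 -> j vzero = 0 ->
  is_subspace (fun w => i w = 0 /\ j w = 0).
Proof.
  intros Hi_add Hi_scale Hj_add Hj_scale Hi0 Hj0.
  split; [auto | split].
  - intros a b [Hia Hja] [Hib Hjb]. rewrite Hi_add, Hj_add. lra.
  - intros c a [Hia Hja]. rewrite Hi_scale, Hj_scale, Hia, Hja. lra.
Qed.

Lemma u_line_subspace : is_subspace u_line.
Proof. apply line_subspace; reflexivity. Qed.

Lemma v_line_subspace : is_subspace v_line.
Proof. apply line_subspace; reflexivity. Qed.

Lemma splits_lines (s : R) : s <> 0 -> splits u_line v_line (mkV 0 0 s).
Proof.
  intro Hs. split.
  - intros [p q r]. exists (mkV p 0 0), (mkV 0 q 0), (r / s).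
    unfold u_line, v_line; simpl. repeat split; try reflexivity.
    apply vec3_ext; simpl; field; exact Hs.
  - intros [a1 a2 a3] [b1 b2 b3] c [Ha2 Ha3] [Hb1 Hb3] H0.
    simpl in *; subst. injection H0; intros H3 H2 H1.
    assert (Hc : c = 0).
    { apply (Rmult_eq_reg_r s); [lra | exact Hs]. }
    subst c. repeat split; apply vec3_ext; simpl; lra.
Qed.

Lemma gnorm_u_line (x w : vec3) : u_line w -> gnorm x w = exp (v3 x * llam) * Rabs (v1 w).
Proof.
  intros [H2 H3]. unfold gnorm. rewrite H2, H3, <- (pow2_abs (v1 w)).
  replace (2 * v3 x * llam) with (2 * (v3 x * llam)) by ring. rewrite exp_double.
  replace (_ + _ + _) with ((exp (v3 x * llam) * Rabs (v1 w)) ^ 2) by ring.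
  apply sqrt_pow2, Rmult_le_pos; [left; apply exp_pos | apply Rabs_pos].
Qed.

Lemma gnorm_v_line (x w : vec3) : v_line w -> gnorm x w = exp (- (v3 x * llam)) * Rabs (v2 w).
Proof.
  intros [H1 H3]. unfold gnorm. rewrite H1, H3, <- (pow2_abs (v2 w)).
  replace (- 2 * v3 x * llam) with (2 * - (v3 x * llam)) by ring. rewrite exp_double.
  replace (_ + _ + _) with ((exp (- (v3 x * llam)) * Rabs (v2 w)) ^ 2) by ring.
  apply sqrt_pow2, Rmult_le_pos; [left; apply exp_pos | apply Rabs_pos].
Qed.

Section VerticalShift.

Variable s : R.

Lemma zshift_flow : is_flow3 (zshift s).
Proof.
  split.
  - intro x. apply vec3_ext; simpl; ring.
  - intros t1 t2 x. apply vec3_ext; simpl; ring.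
Qed.

Lemma zshift_vel (x : vec3) : flow_vel (zshift s) x (mkV 0 0 s).
Proof. split; [|split]; simpl; auto_derive; auto; ring. Qed.

Lemma zshift_diff (t : R) (x w : vec3) : flow_diff (zshift s) t x w w.
Proof. split; [|split]; simpl; auto_derive; auto; ring. Qed.

Lemma gnorm_zshift_u_line (t : R) (x w : vec3) :
  u_line w -> gnorm (zshift s t x) w = exp (s * llam * t) * gnorm x w.
Proof.
  intro Hw. rewrite !gnorm_u_line by exact Hw. simpl.
  replace ((v3 x + s * t) * llam) with (s * llam * t + v3 x * llam) by ring.
  rewrite exp_plus. ring.
Qed.

Lemma gnorm_zshift_v_line (t : R) (x w : vec3) :
  v_line w -> gnorm (zshift s t x) w = exp (- (s * llam) * t) * gnorm x w.
Proof.
  intro Hw. rewrite !gnorm_v_line by exact Hw. simpl.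
  replace (- ((v3 x + s * t) * llam)) with (- (s * llam) * t + - (v3 x * llam)) by ring.
  rewrite exp_plus. ring.
Qed.

Lemma zshift_anosov (Es Eu : vec3 -> Prop) (mu : R) :
  s <> 0 -> 0 < mu -> is_subspace Es -> is_subspace Eu -> splits Es Eu (mkV 0 0 s) ->
  (forall t x w, Es w -> gnorm (zshift s t x) w = exp (- mu * t) * gnorm x w) ->
  (forall t x w, Eu w -> gnorm (zshift s t x) w = exp (mu * t) * gnorm x w) ->
  Anosov_flow (zshift s).
Proof.
  intros Hs Hmu HEs HEu Hsplit Hcontract Hexpand.
  split; [exact zshift_flow|]. split; [intros t x w; exists w; apply zshift_diff|].
  split.
  { intro x. exists (mkV 0 0 s). split; [apply zshift_vel|].
    intro H0. injection H0. exact Hs. }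
  exists (fun _ => Es), (fun _ => Eu), 1, mu.
  split; [lra|]. split; [exact Hmu|]. split; [auto|]. split.
  - intros x X HX. rewrite <- (flow_vel_unique _ _ _ _ (zshift_vel x) HX). exact Hsplit.
  - intros t x w d Hd. rewrite <- (flow_diff_unique _ _ _ _ _ _ (zshift_diff t x w) Hd).
    rewrite !Rmult_1_l. split; intro Hw; split; auto; intros _; right; auto.
Qed.

Lemma zshift_anosov_up : 0 < s -> Anosov_flow (zshift s).
Proof.
  intro Hs. pose proof llam_pos.
  apply (zshift_anosov v_line u_line (s * llam)).
  - lra.
  - apply Rmult_lt_0_compat; assumption.
  - exact v_line_subspace.
  - exact u_line_subspace.
  - apply splits_sym, splits_lines; lra.
  - apply gnorm_zshift_v_line.
  - apply gnorm_zshift_u_line.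
Qed.

Lemma zshift_anosov_down : s < 0 -> Anosov_flow (zshift s).
Proof.
  intro Hs. pose proof llam_pos.
  apply (zshift_anosov u_line v_line (- s * llam)).
  - lra.
  - apply Rmult_lt_0_compat; lra.
  - exact u_line_subspace.
  - exact v_line_subspace.
  - apply splits_lines; lra.
  - intros t x w Hw. rewrite gnorm_zshift_u_line by exact Hw. do 3 f_equal. ring.
  - intros t x w Hw. rewrite gnorm_zshift_v_line by exact Hw. do 3 f_equal. ring.
Qed.

End VerticalShift.

Theorem corollary2 (Phi : R -> phase -> phase) :
  is_geodesic_flow Phi ->
  ((forall t x, in_V 1 (Phi t (embedV 1 x))) /\ Anosov_flow (restrict_flow Phi 1)) /\
  ((forall t x, in_V (-1) (Phi t (embedV (-1) x))) /\ Anosov_flow (restrict_flow Phi (-1))).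
Proof.
  intro HPhi.
  assert (Hrestrict : forall s, s * s = 1 -> restrict_flow Phi s = zshift s).
  { intros s Hs. apply functional_extensionality; intro t.
    apply functional_extensionality; intro x.
    unfold restrict_flow. rewrite geodesic_flow_on_V by assumption.
    apply vec3_ext; reflexivity. }
  assert (Hup : 1 * 1 = 1) by ring.
  assert (Hdown : -1 * -1 = 1) by ring.
  split; split.
  - intros t x. exact (geodesic_flow_preserves_V Phi 1 x HPhi Hup t).
  - rewrite (Hrestrict 1 Hup). apply zshift_anosov_up; lra.
  - intros t x. exact (geodesic_flow_preserves_V Phi (-1) x HPhi Hdown t).
  - rewrite (Hrestrict (-1) Hdown). apply zshift_anosov_down; lra.
Qed.
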